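(* Assume the standing hypotheses and let $\sigma\in(0,1)$. For $(x,\lambda)\in\mathcal B((x^*,\lambda^* ),\delta)$ with $x>0,\lambda>0$, let $(\Delta x^N,\Delta\lambda^N)$ be the Newton direction for $\mu^+=\sigma\mu$ and define, for each $i$ with $x_i[\nabla^2 f(x)]_{ii}+\lambda_i\neq0$, $$\Delta x_i^S=-\frac{x_i[\nabla f(x)]_i-\mu^+}{x_i[\nabla^2 f(x)]_{ii}+\lambda_i}.$$ Then for every such $i$, $$\Delta x_i^S-\Delta x_i^N=\frac{x_i}{x_i[\nabla^2 f(x)]_{ii}+\lambda_i}\sum_{j\neq i}[\nabla^2 f(x)]_{ij}\Delta x_j^N.$$ Moreover, for every $C_1>0$ there exist $\rho>0$, $\bar\mu\in(0,\hat\mu]$ and constants $0<c\le C$ such that for all $\mu\in(0,\bar\mu]$ and all $(x,\lambda)\in\mathcal B((x^*,\lambda^* ),\delta)$ with $x>0,\lambda>0$, $\|(x,\lambda)-(x^\mu,\lambda^\mu)\|<\rho$, $\|F_\mu(x,\lambda)\|\le C_1\mu$: for all $i=1,\dots,n$, $c\le \big(x_i[\nabla^2f(x)]_{ii}+\lambda_i\big)^{-1}\le C$ (in particular the denominator is nonzero), and $|\Delta x_i^S-\Delta x_i^N|\le C\mu^2$ for all $i\in\mathcal A$.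
   Context: Problem: minimize $f(x)$ subject to $x\ge0$, $f:\mathbb R^n\to\mathbb R$ twice continuously differentiable with locally Lipschitz Hessian. Norms Euclidean; $e$ all-ones; $X=\mathrm{diag}(x)$, $\Lambda=\mathrm{diag}(\lambda)$; $F_\mu(x,\lambda)=\begin{bmatrix}\nabla f(x)-\lambda\\ \Lambda Xe-\mu e\end{bmatrix}$, $F'(x,\lambda)=\begin{bmatrix}\nabla^2f(x)&-I\\ \Lambda&X\end{bmatrix}$. The Newton direction for $\mu^+=\sigma\mu$ solves $F'(x,\lambda)(\Delta x^N,\Delta\lambda^N)=-F_{\mu^+}(x,\lambda)$. Standing hypotheses: $(x^*,\lambda^* )$ satisfies $\nabla f(x^* )=\lambda^*$, $x^*\ge0$, $\lambda^*\ge0$, $x_i^*\lambda_i^*=0$, $x^*+\lambda^*>0$, $[\nabla^2f(x^* )]_{\mathcal I\mathcal I}\succ0$, where $\mathcal A=\{i:x^*_i=0\}$, $\mathcal I=\{i:x_i^*>0\}$. $\delta>0$: $F'$ nonsingular on $\mathcal B((x^*,\lambda^* ),\delta)$ with $\|F'^{-1}\|\le M$; $\hat\mu>0$: for $\mu\in(0,\hat\mu]$ a Lipschitz barrier trajectory $(x^\mu,\lambda^\mu)\in\mathcal B((x^*,\lambda^* ),\delta)$ with $F_\mu(x^\mu,\lambda^\mu)=0$, $\|(x^\mu,\lambda^\mu)-(x^*,\lambda^* )\|\le C_4\mu$ exists. *)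

From HB Require Import structures.
From mathcomp Require Import all_boot all_order all_algebra.
From mathcomp Require Import all_classical all_reals all_analysis.
Set Implicit Arguments. Unset Strict Implicit. Unset Printing Implicit Defensive.
Import Order.TTheory GRing.Theory Num.Theory.
Import numFieldNormedType.Exports.
Local Open Scope ring_scope.

Section Defs.
Variables (R : realType) (n : nat).

Definition evec (i : 'I_n) : 'cV[R]_n := delta_mx i 0.

Definition enorm (v : 'cV[R]_n) : R := Num.sqrt (\sum_i v i 0 ^+ 2).

Definition enorm2 (x l : 'cV[R]_n) : R :=
  Num.sqrt (\sum_i x i 0 ^+ 2 + \sum_i l i 0 ^+ 2).

Definition enormN (v : 'cV[R]_(n + n)) : R := Num.sqrt (\sum_i v i 0 ^+ 2).

Definition grad (f : 'cV[R]_n -> R) (x : 'cV[R]_n) : 'cV[R]_n :=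
  \col_i 'D_(evec i) f x.

Definition hess (f : 'cV[R]_n -> R) (x : 'cV[R]_n) : 'M[R]_n :=
  \matrix_(i, j) 'D_(evec j) (fun y => 'D_(evec i) f y) x.

Definition twice_cont_diff (f : 'cV[R]_n -> R) : Prop :=
  (forall x, differentiable f x) /\
  (forall i x, differentiable (fun y => 'D_(evec i) f y) x) /\
  (forall i j, continuous (fun y => 'D_(evec j) (fun z => 'D_(evec i) f z) y)).

Definition hess_loc_lipschitz (f : 'cV[R]_n -> R) : Prop :=
  forall x0 : 'cV[R]_n, exists r : R, exists L : R, 0 < r /\
    forall y z : 'cV[R]_n, enorm (y - x0) < r -> enorm (z - x0) < r ->
      forall w : 'cV[R]_n,
        enorm ((hess f y - hess f z) *m w) <= L * enorm (y - z) * enorm w.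

Definition dg (x : 'cV[R]_n) : 'M[R]_n := diag_mx x^T.

Definition Fmu (f : 'cV[R]_n -> R) (mu : R) (x l : 'cV[R]_n) : 'cV[R]_(n + n) :=
  col_mx (grad f x - l) (\col_i (l i 0 * x i 0 - mu)).

Definition Fprime (f : 'cV[R]_n -> R) (x l : 'cV[R]_n) : 'M[R]_(n + n) :=
  block_mx (hess f x) (- 1%:M) (dg l) (dg x).

Definition newton_dir (f : 'cV[R]_n -> R) (mup : R) (x l dx dl : 'cV[R]_n) : Prop :=
  Fprime f x l *m col_mx dx dl = - Fmu f mup x l.

Definition denom (f : 'cV[R]_n -> R) (x l : 'cV[R]_n) (i : 'I_n) : R :=
  x i 0 * hess f x i i + l i 0.

Definition dxS (f : 'cV[R]_n -> R) (mup : R) (x l : 'cV[R]_n) (i : 'I_n) : R :=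
  - (x i 0 * grad f x i 0 - mup) / denom f x l i.

Definition vpos (v : 'cV[R]_n) : Prop := forall i, 0 < v i 0.

End Defs.

(* Part 1 is pure algebra: eliminating dl_i between the i-th rows of the two
   block equations of the Newton system gives
   dxS_i - dx_i = x_i / (x_i H_ii + l_i) * sum_{j <> i} H_ij dx_j.

   Part 2 is local analysis around the solution (xs, ls).  Strict
   complementarity and second-order sufficiency make every denominator
   x_i H_ii + l_i positive at (xs, ls); by continuity of the Hessian it stays
   within half of that value on a small coordinate neighbourhood, which pins
   its inverse between positive constants.  Close to the barrier trajectory
   and for small mu the iterate lies in that neighbourhood; there the Newton
   step is O(mu) (bounded inverse Jacobian and O(mu) residual), and on the
   active set l_i is bounded below, so x_i = O(mu) by complementarity.  The
   identity of part 1 then bounds the gap by O(mu) * O(mu). *)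
From HB Require Import structures.
From mathcomp Require Import all_boot all_order all_algebra.
From mathcomp Require Import all_classical all_reals all_analysis.
From mathcomp Require Import ring lra.
Import Order.TTheory GRing.Theory Num.Theory.
Import numFieldNormedType.Exports.
Local Open Scope ring_scope.

Section Norms.
Context {R : realType}.

Lemma sum_sqr_ge0 {I : finType} (F : I -> R) : 0 <= \sum_i F i ^+ 2.
Proof. by apply: sumr_ge0 => i _; exact: sqr_ge0. Qed.

Lemma coord_le_sqrt_sum {I : finType} (F : I -> R) (k : I) (e : R) :
  0 <= e -> `|F k| <= Num.sqrt (\sum_i F i ^+ 2 + e).
Proof.
move=> e_ge0; rewrite -sqrtr_sqr; apply: ler_wsqrtr.
rewrite (bigD1 k) //= -addrA ler_wpDr // addr_ge0 //.
by apply: sumr_ge0 => i _; exact: sqr_ge0.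
Qed.

Lemma enorm2_coord_l {n} (v w : 'cV[R]_n) k : `|v k 0| <= enorm2 v w.
Proof. exact: (coord_le_sqrt_sum (fun i => v i 0) k _ (sum_sqr_ge0 (fun i => w i 0))). Qed.

Lemma enorm2_coord_r {n} (v w : 'cV[R]_n) k : `|w k 0| <= enorm2 v w.
Proof.
by rewrite /enorm2 addrC; exact: (coord_le_sqrt_sum (fun i => w i 0) k _ (sum_sqr_ge0 (fun i => v i 0))).
Qed.

Lemma enormN_coord {n} (v : 'cV[R]_(n + n)) k : `|v k 0| <= enormN v.
Proof. by have := coord_le_sqrt_sum (fun i => v i 0) k _ (lexx 0); rewrite addr0. Qed.

Lemma enormN_opp {n} (v : 'cV[R]_(n + n)) : enormN (- v) = enormN v.
Proof. by rewrite /enormN; congr Num.sqrt; apply: eq_bigr => k _; rewrite mxE sqrrN. Qed.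

Lemma inv_near (d D : R) : 0 < D -> `|d - D| <= D / 2 ->
  0 < d /\ 2 / (3 * D) <= d^-1 <= 2 / D.
Proof.
move=> D_gt0; rewrite ler_norml => /andP[lo hi].
have d_gt0 : 0 < d by lra.
split => //; apply/andP; split.
- rewrite -[2 / (3 * D)]invf_div lef_pV2 ?posrE ?divr_gt0 ?mulr_gt0 //; lra.
- rewrite -[2 / D]invf_div lef_pV2 ?posrE ?divr_gt0 //; lra.
Qed.

End Norms.

Section Neighbourhoods.
Context {R : realType} {n : nat}.

Definition coord_ball (c : 'cV[R]_n) (r : R) (x : 'cV[R]_n) : Prop :=
  forall k, `|x k 0 - c k 0| < r.

Definition holds_near (c d : 'cV[R]_n) (P : 'cV[R]_n -> 'cV[R]_n -> Prop) :=
  exists2 r, 0 < r & forall x l, coord_ball c r x -> coord_ball d r l -> P x l.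

Lemma coord_ball_le (c x : 'cV[R]_n) (r r' : R) :
  r <= r' -> coord_ball c r x -> coord_ball c r' x.
Proof. by move=> rr' Hx k; exact: lt_le_trans (Hx k) rr'. Qed.

Lemma holds_near_and {c d : 'cV[R]_n} {P Q : 'cV[R]_n -> 'cV[R]_n -> Prop} :
  holds_near c d P -> holds_near c d Q -> holds_near c d (fun x l => P x l /\ Q x l).
Proof.
move=> [r1 r1_gt0 HP] [r2 r2_gt0 HQ].
exists (Order.min r1 r2); first by rewrite lt_min r1_gt0.
have le1 : Order.min r1 r2 <= r1 by rewrite ge_min lexx.
have le2 : Order.min r1 r2 <= r2 by rewrite ge_min lexx orbT.
move=> x l Hx Hl; split.
- by apply: HP; [exact: coord_ball_le le1 Hx | exact: coord_ball_le le1 Hl].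
- by apply: HQ; [exact: coord_ball_le le2 Hx | exact: coord_ball_le le2 Hl].
Qed.

Lemma holds_near_all {I : finType} {c d : 'cV[R]_n} {P : I -> 'cV[R]_n -> 'cV[R]_n -> Prop} :
  (forall i, holds_near c d (P i)) -> holds_near c d (fun x l => forall i, P i x l).
Proof.
move=> HP.
have /boolp.choice [g Hg] : forall i, exists r, 0 < r /\
    forall x l, coord_ball c r x -> coord_ball d r l -> P i x l.
  by move=> i; have [r r_gt0 Hr] := HP i; exists r.
exists (\big[Order.min/1]_i g i).
  by apply: lt_bigmin => // i _; case: (Hg i).
move=> x l Hx Hl i; have le_i := bigmin_le 1 i g.
by case: (Hg i) => _; apply; [exact: coord_ball_le le_i Hx | exact: coord_ball_le le_i Hl].
Qed.

Lemma continuous_holds_near {g : 'cV[R]_n -> R} (c d : 'cV[R]_n) {eps : R} :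
  continuous g -> 0 < eps -> holds_near c d (fun x _ => `|g x - g c| < eps).
Proof.
move=> g_cont eps_gt0.
have /cvgrPdist_lt/(_ _ eps_gt0)/nbhs_normP [r /= r_gt0 Hr] := g_cont c.
exists r => // y l Hy _; rewrite distrC; apply: Hr.
rewrite /ball_ /=; change (mx_norm (c - y) < r); rewrite mx_normrE.
apply/bigmax_ltP; split => // -[i j] _ /=.
by rewrite (ord1 j) !mxE distrC.
Qed.

Lemma coord_balls_of_enorm2 {x l y m xs ls : 'cV[R]_n} {r : R} :
  enorm2 (x - y) (l - m) < r / 2 -> enorm2 (y - xs) (m - ls) <= r / 2 ->
  coord_ball xs r x /\ coord_ball ls r l.
Proof.
move=> Hxy Hys; split=> k.
- have := enorm2_coord_l (x - y) (l - m) k; have := enorm2_coord_l (y - xs) (m - ls) k.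
  rewrite !mxE; have := ler_distD (y k 0) (x k 0) (xs k 0); lra.
- have := enorm2_coord_r (x - y) (l - m) k; have := enorm2_coord_r (y - xs) (m - ls) k.
  rewrite !mxE; have := ler_distD (m k 0) (l k 0) (ls k 0); lra.
Qed.

End Neighbourhoods.

Section NewtonStep.
Context {R : realType} {n : nat} {f : 'cV[R]_n -> R}.
Implicit Types (mu mup : R) (x l dx dl : 'cV[R]_n).

Lemma newton_rows {mup x l dx dl} i :
  newton_dir f mup x l dx dl ->
  (\sum_j hess f x i j * dx j 0) - dl i 0 = - (grad f x i 0 - l i 0) /\
  l i 0 * dx i 0 + x i 0 * dl i 0 = - (l i 0 * x i 0 - mup).
Proof.
rewrite /newton_dir /Fprime /Fmu /dg mul_block_col opp_col_mx => /eq_col_mx [E1 E2].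
split.
- by have := congr1 (fun M : 'M[R]_(n, 1) => M i 0) E1; rewrite mulNmx mul1mx !mxE.
- by have := congr1 (fun M : 'M[R]_(n, 1) => M i 0) E2; rewrite !mul_diag_mx !mxE.
Qed.

(* Part 1: eliminating dl_i between the two rows expresses the gap between
   the scalar step dxS_i and the Newton step dx_i through the off-diagonal
   Hessian entries of row i. *)
Lemma dxS_sub_newton {mup x l dx dl} i :
  newton_dir f mup x l dx dl -> denom f x l i != 0 ->
  dxS f mup x l i - dx i 0 =
    x i 0 / denom f x l i * \sum_(j < n | j != i) hess f x i j * dx j 0.
Proof.
move=> Hn d_neq0; have [E1 E2] := newton_rows i Hn.
move: E1; rewrite (bigD1 i) //=; set s := \sum_(j < n | j != i) _ => E1.
have E : - (x i 0 * grad f x i 0 - mup) = denom f x l i * dx i 0 + x i 0 * s.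
  have -> : - (x i 0 * grad f x i 0 - mup) =
      x i 0 * (hess f x i i * dx i 0 + s - dl i 0) - x i 0 * l i 0
      + (l i 0 * dx i 0 + x i 0 * dl i 0) + l i 0 * x i 0.
    by rewrite E1 E2; ring.
  by rewrite /denom; ring.
by rewrite /dxS E; field.
Qed.

Lemma newton_dir_bound {mup x l dx dl} {M : R} :
  Fprime f x l \in unitmx ->
  (forall w, enormN (invmx (Fprime f x l) *m w) <= M * enormN w) ->
  newton_dir f mup x l dx dl ->
  forall j, `|dx j 0| <= Num.max M 0 * enormN (Fmu f mup x l).
Proof.
move=> Funit HM Hn j.
have -> : dx j 0 = col_mx dx dl (lshift n j) 0 by rewrite col_mxEu.
apply: le_trans (enormN_coord (col_mx dx dl) (lshift n j)) _.
have -> : col_mx dx dl = invmx (Fprime f x l) *m (- Fmu f mup x l) by rewrite -Hn mulKmx.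
apply: le_trans (HM _) _.
rewrite enormN_opp ler_wpM2r ?le_max ?lexx //.
exact: sqrtr_ge0.
Qed.

(* Lowering the barrier parameter from mu to sigma * mu changes the residual
   by at most mu in each coordinate, hence keeps it of order mu. *)
Lemma Fmu_lower_bound mu (sigma C1 : R) x l :
  0 < mu -> 0 < sigma < 1 -> 0 < C1 ->
  enormN (Fmu f mu x l) <= C1 * mu ->
  enormN (Fmu f (sigma * mu) x l) <= 2 * (C1 + n%:R + 1) * mu.
Proof.
move=> mu_gt0 /andP[sigma_gt0 sigma_lt1] C1_gt0 HF.
set S := \sum_k (Fmu f mu x l k 0) ^+ 2.
have HS : S <= (C1 * mu) ^+ 2.
  have S_ge0 : 0 <= S by exact: sum_sqr_ge0.
  rewrite -(sqr_sqrtr S_ge0) lerXn2r ?nnegrE ?sqrtr_ge0 //.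
  by rewrite mulr_ge0 // ltW.
have coord k : (Fmu f (sigma * mu) x l k 0) ^+ 2 <= 2 * (Fmu f mu x l k 0) ^+ 2 + 2 * mu ^+ 2.
  case: (split_ordP k) => j -> /=; rewrite /Fmu ?col_mxEu ?col_mxEd !mxE.
    set a := (_ - _); have := sqr_ge0 a; have := sqr_ge0 mu; lra.
  set a := l j 0 * x j 0.
  have : 0 <= sigma * mu * ((2 - sigma) * mu) by rewrite !mulr_ge0 ?ltW //; lra.
  have := sqr_ge0 (a - mu - (1 - sigma) * mu); nra.
have n_ge0 : 0 <= n%:R :> R by rewrite ler0n.
have Hsum : \sum_k (Fmu f (sigma * mu) x l k 0) ^+ 2 <= (2 * (C1 + n%:R + 1) * mu) ^+ 2.
  apply: le_trans (ler_sum _ (fun k _ => coord k)) _.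
  rewrite big_split /= -mulr_sumr sumr_const card_ord -/S.
  set m := n%:R : R.
  have : 0 <= C1 * m * mu ^+ 2 by rewrite !mulr_ge0 ?sqr_ge0 // ltW.
  have := sqr_ge0 (C1 * mu); have := sqr_ge0 mu; have := sqr_ge0 (m * mu).
  nra.
apply: le_trans (ler_wsqrtr Hsum) _.
by rewrite sqrtr_sqr ger0_norm // !mulr_ge0 ?ltW //; lra.
Qed.

Lemma compl_le_residual mu x l i : l i 0 * x i 0 <= mu + enormN (Fmu f mu x l).
Proof.
have := enormN_coord (Fmu f mu x l) (rshift n i).
rewrite /Fmu col_mxEd mxE => H; have := ler_norm (l i 0 * x i 0 - mu); lra.
Qed.

(* On the active set, l_i stays away from zero, so the residual bound forces
   x_i to be of order mu. *)
Lemma x_le_of_residual {mu} {C1 a : R} {x l i} :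
  0 < a -> a <= l i 0 -> 0 <= x i 0 -> enormN (Fmu f mu x l) <= C1 * mu ->
  x i 0 <= (1 + C1) * mu / a.
Proof.
move=> a_gt0 a_le x_ge0 HF; rewrite ler_pdivlMr //.
have := ler_wpM2l x_ge0 a_le; have := compl_le_residual mu x l i.
rewrite [l i 0 * _]mulrC; lra.
Qed.

Lemma dxS_sub_newton_bound {mup x l dx dl i} {X Dinv B : R} {h : 'I_n -> R} :
  newton_dir f mup x l dx dl -> 0 < denom f x l i ->
  0 <= x i 0 <= X -> (denom f x l i)^-1 <= Dinv ->
  (forall j, `|hess f x i j| <= h j) -> (forall j, `|dx j 0| <= B) ->
  `|dxS f mup x l i - dx i 0| <= X * Dinv * ((\sum_(j < n | j != i) h j) * B).
Proof.
move=> Hn d_gt0 /andP[x_ge0 x_le] d_le Hh Hdx.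
rewrite (dxS_sub_newton i Hn) ?lt0r_neq0 // normrM normrM (ger0_norm x_ge0).
rewrite normfV (gtr0_norm d_gt0) mulr_suml.
have dinv_ge0 : 0 <= (denom f x l i)^-1 by rewrite invr_ge0 ltW.
apply: ler_pM; rewrite ?mulr_ge0 //.
- exact: ler_pM.
- apply: le_trans (ler_norm_sum _ _ _) _; apply: ler_sum => j _.
  by rewrite normrM; apply: ler_pM.
Qed.

End NewtonStep.

Section SolutionPoint.
Context {R : realType} {n : nat}.

Lemma hess_continuous {f : 'cV[R]_n -> R} : twice_cont_diff f ->
  forall i j, continuous (fun y => hess f y i j).
Proof.
move=> [_ [_ Hc]] i j.
have -> : (fun y => hess f y i j) = (fun y => 'D_(evec R j) (fun z => 'D_(evec R i) f z) y).
  by apply: boolp.funext => y; rewrite mxE.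
exact: Hc.
Qed.

(* A matrix positive definite on the coordinates free at xs has a positive
   diagonal entry at every free coordinate (test it on the unit vector). *)
Lemma diag_pos_of_pd {H : 'M[R]_n} {xs : 'cV[R]_n} {i} :
  (forall v : 'cV[R]_n, v != 0 -> (forall k, xs k 0 = 0 -> v k 0 = 0) ->
     0 < (v^T *m H *m v) 0 0) ->
  xs i 0 != 0 -> 0 < H i i.
Proof.
move=> Hpd xs_neq0.
have := Hpd (delta_mx i 0); rewrite trmx_delta -rowE -colE !mxE; apply.
  by apply/eqP => /(congr1 (fun v : 'cV[R]_n => v i 0)); rewrite !mxE !eqxx => /eqP; rewrite oner_eq0.
move=> k xs_k; rewrite mxE; case: (eqVneq k i) => [ki|] //=.
by move: xs_neq0; rewrite -ki xs_k eqxx.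
Qed.

(* Strict complementarity and second-order sufficiency make every
   denominator positive at the solution. *)
Lemma denom_star_pos (f : 'cV[R]_n -> R) (xs ls : 'cV[R]_n) :
  (forall i, 0 <= xs i 0) -> (forall i, 0 <= ls i 0) -> (forall i, 0 < xs i 0 + ls i 0) ->
  (forall v : 'cV[R]_n, v != 0 -> (forall k, xs k 0 = 0 -> v k 0 = 0) ->
     0 < (v^T *m hess f xs *m v) 0 0) ->
  forall i, 0 < denom f xs ls i.
Proof.
move=> xs_ge0 ls_ge0 strict Hpd i; rewrite /denom.
case: (eqVneq (xs i 0) 0) => [xs_eq0|xs_neq0].
  by have := strict i; rewrite xs_eq0 mul0r !add0r.
have xs_gt0 : 0 < xs i 0 by rewrite lt_neqAle eq_sym xs_neq0 xs_ge0.
have := mulr_gt0 xs_gt0 (diag_pos_of_pd Hpd xs_neq0); have := ls_ge0 i; lra.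
Qed.

End SolutionPoint.

Section LocalEstimates.
Context {R : realType} {n : nat} (f : 'cV[R]_n -> R) (xs ls : 'cV[R]_n).

(* By continuity of the Hessian, each denominator stays within half of its
   (positive) value at the solution. *)
Lemma denom_near i :
  continuous (fun y => hess f y i i) -> 0 < denom f xs ls i ->
  holds_near xs ls (fun x l => `|denom f x l i - denom f xs ls i| <= denom f xs ls i / 2).
Proof.
set D := denom f xs ls i; set h := hess f xs i i => Hc D_gt0.
have a_gt0 : 0 < `|xs i 0| + 1 by rewrite ltr_wpDl.
have h_gt0 : 0 < `|h| + 1 by rewrite ltr_wpDl.
set e := D / (4 * (`|xs i 0| + 1)).
have e_gt0 : 0 < e by rewrite divr_gt0 // mulr_gt0.
have [ra ra_gt0 Hra] := continuous_holds_near xs ls Hc e_gt0.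
set r := Order.min 1 (Order.min ra (D / (8 * (`|h| + 1)))).
exists r; first by rewrite !lt_min ltr01 ra_gt0 divr_gt0 // mulr_gt0.
move=> x l Hx Hl.
have := lexx r; rewrite {2}/r !le_min => /and3P[r_le1 r_le_ra r_le_D].
have Hhii : `|hess f x i i - h| < e.
  by apply: Hra; [exact: coord_ball_le r_le_ra Hx | exact: coord_ball_le r_le_ra Hl].
have dx := Hx i; have dl := Hl i.
have x_le : `|x i 0| <= `|xs i 0| + 1.
  have := ler_distD (xs i 0) (x i 0) 0; rewrite !subr0.
  have := lt_le_trans dx r_le1; lra.
have E : denom f x l i - D =
    x i 0 * (hess f x i i - h) + (x i 0 - xs i 0) * h + (l i 0 - ls i 0).
  have expand (a b c d p q : R) : c * a + p - (d * b + q) = c * (a - b) + (c - d) * b + (p - q).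
    by ring.
  exact: expand.
have t1 : `|x i 0| * `|hess f x i i - h| <= D / 4.
  have -> : D / 4 = (`|xs i 0| + 1) * e.
    by rewrite /e; field; rewrite lt0r_neq0.
  by apply: ler_pM => //; exact: ltW.
have t2 : `|x i 0 - xs i 0| * `|h| <= r * `|h| by rewrite ler_wpM2r // ltW.
have t3 : r * (8 * (`|h| + 1)) <= D by rewrite -ler_pdivlMr // mulr_gt0.
have t4 : `|denom f x l i - D| <=
    `|x i 0| * `|hess f x i i - h| + `|x i 0 - xs i 0| * `|h| + `|l i 0 - ls i 0|.
  rewrite E -!normrM; apply: le_trans (ler_normD _ _) _.
  by rewrite lerD2r ler_normD.
have := ltW dl; lra.
Qed.

Lemma hess_row_near i :
  (forall j, continuous (fun y => hess f y i j)) ->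
  holds_near xs ls (fun x (_ : 'cV[R]_n) => forall j, `|hess f x i j| <= `|hess f xs i j| + 1).
Proof.
move=> Hc.
have [r r_gt0 Hr] := holds_near_all (fun j => continuous_holds_near xs ls (Hc j) ltr01).
have le_of_dist (a b : R) : `|a - b| < 1 -> `|a| <= `|b| + 1.
  by have := ler_distD b a 0; rewrite !subr0; lra.
by exists r => // x l Hx Hl j; exact: le_of_dist (Hr x l Hx Hl j).
Qed.

Lemma local_estimates :
  (forall i j, continuous (fun y => hess f y i j)) -> (forall i, 0 < denom f xs ls i) ->
  holds_near xs ls (fun x l => forall i,
    (`|denom f x l i - denom f xs ls i| <= denom f xs ls i / 2 /\
     forall j, `|hess f x i j| <= `|hess f xs i j| + 1) /\
    `|l i 0 - ls i 0| < denom f xs ls i / 2).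
Proof.
move=> Hc D_gt0; apply: holds_near_all => i.
apply: holds_near_and; first apply: holds_near_and.
- exact: denom_near.
- exact: hess_row_near.
- by exists (denom f xs ls i / 2); [rewrite divr_gt0 | move=> x l _; apply].
Qed.

End LocalEstimates.

Section NearTrajectory.
Context {R : realType} {n : nat} {f : 'cV[R]_n -> R} {xs ls : 'cV[R]_n}
  {delta M muhat C4 sigma : R} {xmu lmu : R -> 'cV[R]_n}.
Hypothesis hess_cont : forall i j, continuous (fun y => hess f y i j).
Hypothesis denom_star_gt0 : forall i, 0 < denom f xs ls i.
Hypothesis Fprime_inv_bound : forall x l : 'cV[R]_n, enorm2 (x - xs) (l - ls) < delta ->
  Fprime f x l \in unitmx /\
  forall w, enormN (invmx (Fprime f x l) *m w) <= M * enormN w.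
Hypothesis muhat_gt0 : 0 < muhat.
Hypothesis traj_close : forall mu, 0 < mu <= muhat ->
  enorm2 (xmu mu - xs) (lmu mu - ls) <= C4 * mu.
Hypothesis sigma_range : 0 < sigma < 1.

(* For mu small, the trajectory point lies within r / 2 of the solution, so
   points within r / 2 of the trajectory are within r of the solution. *)
Lemma traj_neighbourhood {r : R} : 0 < r ->
  exists2 mubar, 0 < mubar <= muhat & forall mu x l, 0 < mu <= mubar ->
    enorm2 (x - xmu mu) (l - lmu mu) < r / 2 -> coord_ball xs r x /\ coord_ball ls r l.
Proof.
move=> r_gt0; have a_gt0 : 0 < `|C4| + 1 by rewrite ltr_wpDl.
exists (Order.min muhat (r / (2 * (`|C4| + 1)))).
  by rewrite lt_min muhat_gt0 divr_gt0 ?mulr_gt0 // ge_min lexx.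
move=> mu x l /andP[mu_gt0]; rewrite le_min => /andP[mu_le_hat mu_le_r] Hx.
apply: (coord_balls_of_enorm2 Hx); apply: le_trans (traj_close mu _) _.
  by rewrite mu_gt0 (le_trans mu_le_hat).
have : (`|C4| + 1) * mu <= r / 2.
  have -> : r / 2 = (`|C4| + 1) * (r / (2 * (`|C4| + 1))) by field; rewrite lt0r_neq0.
  by rewrite ler_wpM2l // ltW.
have := ler_norm C4; nra.
Qed.

Lemma newton_step_small {mu C1 : R} {x l dx dl : 'cV[R]_n} :
  0 < mu -> 0 < C1 -> enorm2 (x - xs) (l - ls) < delta ->
  enormN (Fmu f mu x l) <= C1 * mu -> newton_dir f (sigma * mu) x l dx dl ->
  forall j, `|dx j 0| <= Num.max M 0 * (2 * (C1 + n%:R + 1)) * mu.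
Proof.
move=> mu_gt0 C1_gt0 near_star HF Hn j.
have [Funit HM] := Fprime_inv_bound x l near_star.
have Mp_ge0 : 0 <= Num.max M 0 by rewrite le_max lexx orbT.
apply: le_trans (newton_dir_bound Funit HM Hn j) _; rewrite -mulrA ler_wpM2l //.
exact: Fmu_lower_bound.
Qed.

Lemma near_trajectory_bounds (C1 : R) : 0 < C1 ->
  exists rho mubar c C : R,
    [/\ 0 < rho, 0 < mubar <= muhat, 0 < c, c <= C &
    forall (mu : R) (x l : 'cV[R]_n),
      0 < mu <= mubar -> enorm2 (x - xs) (l - ls) < delta ->
      vpos x -> vpos l ->
      enorm2 (x - xmu mu) (l - lmu mu) < rho ->
      enormN (Fmu f mu x l) <= C1 * mu ->
      (forall i : 'I_n, denom f x l i != 0 /\ c <= (denom f x l i)^-1 <= C) /\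
      (forall (dx dl : 'cV[R]_n), newton_dir f (sigma * mu) x l dx dl ->
         forall i : 'I_n, xs i 0 = 0 ->
           `|dxS f (sigma * mu) x l i - dx i 0| <= C * mu ^+ 2)].
Proof.
move=> C1_gt0.
have [r r_gt0 Hloc] := local_estimates f xs ls hess_cont denom_star_gt0.
have [mubar mubar_range Hnear] := traj_neighbourhood r_gt0.
pose D i := denom f xs ls i.
pose c := \big[Order.min/1]_i (2 / (3 * D i)).
pose Cd := \big[Order.max/c]_i (2 / D i).
pose B := Num.max M 0 * (2 * (C1 + n%:R + 1)).
pose Cgap i := (1 + C1) / (ls i 0 / 2) * Cd * ((\sum_(j < n | j != i) (`|hess f xs i j| + 1)) * B).
pose C := \big[Order.max/Cd]_i Cgap i.
have c_gt0 : 0 < c by apply: lt_bigmin => // i _; rewrite divr_gt0 // mulr_gt0.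
have c_le_Cd : c <= Cd by exact: bigmax_ge_id.
have Cd_le_C : Cd <= C by exact: bigmax_ge_id.
exists (r / 2), mubar, c, C; split => //; first by rewrite divr_gt0.
  exact: le_trans c_le_Cd Cd_le_C.
move=> mu x l mu_range near_star xpos lpos near_traj HF.
have [Hx Hl] := Hnear mu x l mu_range near_traj.
have mu_gt0 : 0 < mu by case/andP: mu_range.
have Hd i : 0 < denom f x l i /\ 2 / (3 * D i) <= (denom f x l i)^-1 <= 2 / D i.
  by have [[Hdi _] _] := Hloc x l Hx Hl i; exact: inv_near.
split.
  move=> i; have [d_gt0 /andP[lo hi]] := Hd i; split; first exact: lt0r_neq0.
  by rewrite (le_trans (bigmin_le _ i _) lo) (le_trans hi (le_trans (le_bigmax _ _ i) Cd_le_C)).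
move=> dx dl Hn i xs_i0.
have [[_ Hrow] Hli] := Hloc x l Hx Hl i.
have D_eq : D i = ls i 0 by rewrite /D /denom xs_i0 mul0r add0r.
have ls_gt0 : 0 < ls i 0 by rewrite -D_eq; exact: denom_star_gt0.
have l_ge : ls i 0 / 2 <= l i 0 by move: Hli; rewrite -/(D i) D_eq ltr_norml; lra.
have Hdx := newton_step_small mu_gt0 C1_gt0 near_star HF Hn.
have half_gt0 : 0 < ls i 0 / 2 by rewrite divr_gt0.
have x_range : 0 <= x i 0 <= (1 + C1) * mu / (ls i 0 / 2).
  by rewrite (x_le_of_residual half_gt0 l_ge (ltW (xpos i)) HF) andbT ltW.
have [d_gt0 /andP[_ d_le]] := Hd i.
have Cd_ge : 2 / D i <= Cd by exact: le_bigmax.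
apply: le_trans (dxS_sub_newton_bound Hn d_gt0 x_range (le_trans d_le Cd_ge) Hrow Hdx) _.
have -> : (1 + C1) * mu / (ls i 0 / 2) * Cd * ((\sum_(j < n | j != i) (`|hess f xs i j| + 1)) * (B * mu))
    = Cgap i * mu ^+ 2 by rewrite /Cgap; ring.
by rewrite ler_wpM2r ?sqr_ge0 //; exact: le_bigmax.
Qed.

End NearTrajectory.

Theorem proposition1 (R : realType) (n : nat) (f : 'cV[R]_n -> R)
  (xs ls : 'cV[R]_n) (delta M muhat C4 : R)
  (xmu lmu : R -> 'cV[R]_n) (sigma : R) :
  (* f is C^2 with locally Lipschitz Hessian *)
  twice_cont_diff f -> hess_loc_lipschitz f ->
  (* (xs, ls) satisfies the standing second-order conditions *)
  grad f xs = ls ->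
  (forall i, 0 <= xs i 0) -> (forall i, 0 <= ls i 0) ->
  (forall i, xs i 0 * ls i 0 = 0) -> (forall i, 0 < xs i 0 + ls i 0) ->
  (forall v : 'cV[R]_n, v != 0 -> (forall i, xs i 0 = 0 -> v i 0 = 0) ->
      0 < (v^T *m hess f xs *m v) 0 0) ->
  (* delta, M: F' nonsingular on the ball, with ||F'^{-1}|| <= M *)
  0 < delta ->
  (forall x l : 'cV[R]_n, enorm2 (x - xs) (l - ls) < delta ->
      Fprime f x l \in unitmx /\
      forall w : 'cV[R]_(n + n), enormN (invmx (Fprime f x l) *m w) <= M * enormN w) ->
  (* muhat, C4: Lipschitz barrier trajectory *)
  0 < muhat ->
  (exists L : R, forall mu1 mu2, 0 < mu1 <= muhat -> 0 < mu2 <= muhat ->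
      enorm2 (xmu mu1 - xmu mu2) (lmu mu1 - lmu mu2) <= L * `|mu1 - mu2|) ->
  (forall mu, 0 < mu <= muhat ->
     [/\ vpos (xmu mu), vpos (lmu mu),
         enorm2 (xmu mu - xs) (lmu mu - ls) < delta,
         Fmu f mu (xmu mu) (lmu mu) = 0 &
         enorm2 (xmu mu - xs) (lmu mu - ls) <= C4 * mu]) ->
  0 < sigma < 1 ->
  (* part 1: the componentwise identity *)
  (forall (mu : R) (x l dx dl : 'cV[R]_n),
     0 < mu -> enorm2 (x - xs) (l - ls) < delta -> vpos x -> vpos l ->
     newton_dir f (sigma * mu) x l dx dl ->
     forall i : 'I_n, denom f x l i != 0 ->
       dxS f (sigma * mu) x l i - dx i 0 =
         x i 0 / denom f x l i * \sum_(j < n | j != i) hess f x i j * dx j 0)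
  /\
  (* part 2: bounds near the trajectory *)
  (forall C1 : R, 0 < C1 ->
     exists rho mubar c C : R,
       [/\ 0 < rho, 0 < mubar <= muhat, 0 < c, c <= C &
       forall (mu : R) (x l : 'cV[R]_n),
         0 < mu <= mubar -> enorm2 (x - xs) (l - ls) < delta ->
         vpos x -> vpos l ->
         enorm2 (x - xmu mu) (l - lmu mu) < rho ->
         enormN (Fmu f mu x l) <= C1 * mu ->
         (forall i : 'I_n, denom f x l i != 0 /\
            c <= (denom f x l i)^-1 <= C) /\
         (forall (dx dl : 'cV[R]_n), newton_dir f (sigma * mu) x l dx dl ->
            forall i : 'I_n, xs i 0 = 0 ->
              `|dxS f (sigma * mu) x l i - dx i 0| <= C * mu ^+ 2)]).
Proof.
move=> f_C2 _ _ xs_ge0 ls_ge0 _ strict pd _ Fprime_inv muhat_gt0 _ traj sigma_range.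
split.
- by move=> mu x l dx dl _ _ _ _ Hn i; exact: (dxS_sub_newton i Hn).
- apply: (near_trajectory_bounds (hess_continuous f_C2) _ Fprime_inv muhat_gt0 _ sigma_range).
  + exact: (denom_star_pos f xs ls xs_ge0 ls_ge0 strict pd).
  + by move=> mu /traj [_ _ _ _ traj_C4]; exact: traj_C4.
Qed.
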